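(* Let $X$ be a separated metric compact Hausdorff space with metric $d$, let $\gamma$ be an equivalence continuous submetric on $X$, and let $A=\{a\in X\mid\gamma((a,0),(a,1))=0\}$ (which equals $\{a\in X\mid\gamma((a,1),(a,0))=0\}$). Then $\gamma$ is effective if and only if for all $x,y\in X$ and $i\in\{0,1\}$, $$\gamma((x,i),(y,1-i))=\inf_{a\in A}\big(d(x,a)+d(a,y)\big).$$
   Context: A metric on a set $X$ is a map $d\colon X\times X\to[0,\infty]$ with $d(x,x)=0$ and $d(x,z)\le d(x,y)+d(y,z)$ (not necessarily symmetric, $\infty$ allowed); separated means $d(x,y)=0=d(y,x)$ implies $x=y$. A separated metric compact Hausdorff space is a compact Hausdorff space with a separated metric continuous $X\times X\to[0,\infty]$ for the upper topology on $[0,\infty]$ (open sets $]u,\infty]$); $\mathbf{MetCH_{sep}}$ is the category of these with continuous non-expansive maps. $X+X$ is the coproduct with elements $(x,i)$, $i\in\{0,1\}$, coproduct topology and metric $d((x,i),(y,i))=d(x,y)$, $d((x,i),(y,1-i))=\infty$. A binary continuous submetric on $X$ is a (not necessarily separated) metric $\gamma$ on $X+X$, continuous for the upper topology, below the coproduct metric. Its associated corelation is $\binom{q_0}{q_1}\colon X+X\to S:=(X+X)/{\sim_\gamma}$ where $u\sim_\gamma v$ iff $\gamma(u,v)=\gamma(v,u)=0$, $S$ has quotient topology and metric $([u],[v])\mapsto\gamma(u,v)$, $q_i(x)=[(x,i)]$. The corelation is reflexive if there is a morphism $e\colon S\to X$ with $e q_0=e q_1=1_X$; symmetric if there is $s\colon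 S\to S$ with $s q_0=q_1$, $s q_1=q_0$; transitive if, with $\lambda_0,\lambda_1\colon S\to P$ the pushout of $q_1$ and $q_0$ (so $\lambda_0 q_1=\lambda_1 q_0$), there is $t\colon S\to P$ with $t q_0=\lambda_0 q_0$, $t q_1=\lambda_1 q_1$; $\gamma$ is an equivalence continuous submetric if its corelation is all three. $\gamma$ is effective if, with $i\colon E\to X$ the equaliser of $q_0,q_1$ in $\mathbf{MetCH_{sep}}$, the square $q_0\circ i=q_1\circ i$ is a pushout in $\mathbf{MetCH_{sep}}$. *)

From HB Require Import structures.
From mathcomp Require Import all_boot all_order all_algebra generic_quotient.
From mathcomp Require Import all_classical all_reals topology.
From mathcomp Require Import ereal.

Set Implicit Arguments.
Unset Strict Implicit.
Unset Printing Implicit Defensive.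

Import Order.TTheory GRing.Theory Num.Theory.
Local Open Scope classical_set_scope.
Local Open Scope ring_scope.
Local Open Scope ereal_scope.
Local Open Scope quotient_scope.

(* Objects of MetCH_sep : compact Hausdorff spaces equipped with a separated
   [0,oo]-valued (not necessarily symmetric) metric, continuous for the upper
   topology on [0,oo] (i.e. every set {(x,y) | u < d x y} is open in X x X). *)
Record MetCH (R : realType) := MkMetCH {
  mc_T :> topologicalType;
  mc_d : mc_T -> mc_T -> \bar R;
  mc_compact : compact [set: mc_T];
  mc_hausdorff : hausdorff_space mc_T;
  mc_d_ge0 : forall x y, 0 <= mc_d x y;
  mc_d_refl : forall x, mc_d x x = 0;
  mc_d_triangle : forall x y z, mc_d x z <= mc_d x y + mc_d y z;
  mc_d_sep : forall x y, mc_d x y = 0 -> mc_d y x = 0 -> x = y;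
  mc_d_cont : forall u : \bar R, open [set p : mc_T * mc_T | u < mc_d p.1 p.2]
}.
Arguments mc_d {R} m : rename.

Definition is_mor (R : realType) (T1 T2 : topologicalType)
  (d1 : T1 -> T1 -> \bar R) (d2 : T2 -> T2 -> \bar R) (f : T1 -> T2) : Prop :=
  continuous f /\ (forall x y, d2 (f x) (f y) <= d1 x y).

(* The coproduct X + X is represented by X * bool (bool discrete), the
   element (x, i) being the copy of x in summand i (false = 0, true = 1). *)
Definition coprod_d (R : realType) (X : MetCH R) (u v : X * bool) : \bar R :=
  if u.2 == v.2 then mc_d X u.1 v.1 else +oo.

Record submetric (R : realType) (X : MetCH R) := MkSubmetric {
  sm_g :> X * bool -> X * bool -> \bar R;
  sm_ge0 : forall u v, 0 <= sm_g u v;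
  sm_refl : forall u, sm_g u u = 0;
  sm_triangle : forall u v w, sm_g u w <= sm_g u v + sm_g v w;
  sm_cont : forall u : \bar R,
     open [set p : (X * bool) * (X * bool) | u < sm_g p.1 p.2];
  sm_le : forall u v, sm_g u v <= coprod_d u v
}.

Section Corelation.
Variables (R : realType) (X : MetCH R) (g : submetric X).

Definition sm_rel (u v : X * bool) : bool := `[< g u v = 0 /\ g v u = 0 >].

Lemma sm_rel_refl : reflexive sm_rel.
Proof. by move=> u; apply/asboolP; rewrite sm_refl. Qed.

Lemma sm_rel_sym : symmetric sm_rel.
Proof.
move=> u v; apply/asboolP/asboolP => -[] *; by split.
Qed.

Lemma sm_rel_trans : transitive sm_rel.
Proof.
have H : forall a b c, g a b = 0 -> g b c = 0 -> g a c = 0.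
  move=> a b c h1 h2; apply/eqP; rewrite eq_le sm_ge0 andbT.
  by have := sm_triangle g a b c; rewrite h1 h2 adde0.
move=> v u w /asboolP [h1 h2] /asboolP [h3 h4]; apply/asboolP.
by split; [exact: (H _ v) | exact: (H _ v)].
Qed.

Definition sm_equiv : equiv_rel (X * bool) :=
  EquivRel sm_rel sm_rel_refl sm_rel_sym sm_rel_trans.

Definition sm_S : topologicalType := quotient_topology {eq_quot sm_equiv}.

(* metric on S : ([u],[v]) |-> gamma(u,v) (well defined by the triangle
   inequality; computed on chosen representatives) *)
Definition sm_dS (a b : sm_S) : \bar R :=
  g (repr (a : {eq_quot sm_equiv})) (repr (b : {eq_quot sm_equiv})).

Definition sm_q (i : bool) (x : X) : sm_S :=
  (\pi_({eq_quot sm_equiv}) (x, i) : {eq_quot sm_equiv}).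

End Corelation.
Arguments sm_S {R X} g.
Arguments sm_dS {R X} g.
Arguments sm_q {R X} g i x.

Definition is_pushout (R : realType) (A : Type) (B C D : topologicalType)
  (dB : B -> B -> \bar R) (dC : C -> C -> \bar R) (dD : D -> D -> \bar R)
  (f : A -> B) (g : A -> C) (h : B -> D) (k : C -> D) : Prop :=
  [/\ is_mor dB dD h, is_mor dC dD k, h \o f = k \o g &
    forall (Z : MetCH R) (h' : B -> Z) (k' : C -> Z),
      is_mor dB (mc_d Z) h' -> is_mor dC (mc_d Z) k' -> h' \o f = k' \o g ->
      exists u : D -> Z, (is_mor dD (mc_d Z) u /\ u \o h = h' /\ u \o k = k') /\
        forall u' : D -> Z,
          (is_mor dD (mc_d Z) u' /\ u' \o h = h' /\ u' \o k = k') -> u' = u].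

Definition is_equaliser (R : realType) (E X : MetCH R) (Y : topologicalType)
  (dY : Y -> Y -> \bar R) (i : E -> X) (f g : X -> Y) : Prop :=
  [/\ is_mor (mc_d E) (mc_d X) i, f \o i = g \o i &
    forall (Z : MetCH R) (j : Z -> X),
      is_mor (mc_d Z) (mc_d X) j -> f \o j = g \o j ->
      exists u : Z -> E, (is_mor (mc_d Z) (mc_d E) u /\ i \o u = j) /\
        forall u' : Z -> E, (is_mor (mc_d Z) (mc_d E) u' /\ i \o u' = j) -> u' = u].

Section Properties.
Variables (R : realType) (X : MetCH R) (g : submetric X).
Local Notation S := (sm_S g).
Local Notation dS := (sm_dS g).
Local Notation q0 := (sm_q g false).
Local Notation q1 := (sm_q g true).

Definition corel_reflexive : Prop :=
  exists e : S -> X, is_mor dS (mc_d X) e /\ e \o q0 = id /\ e \o q1 = id.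

Definition corel_symmetric : Prop :=
  exists s : S -> S, is_mor dS dS s /\ s \o q0 = q1 /\ s \o q1 = q0.

Definition corel_transitive : Prop :=
  forall (P : MetCH R) (l0 l1 : S -> P),
    is_pushout dS dS (mc_d P) q1 q0 l0 l1 ->
    exists t : S -> P, is_mor dS (mc_d P) t /\
      t \o q0 = l0 \o q0 /\ t \o q1 = l1 \o q1.

Definition equivalence_submetric : Prop :=
  [/\ corel_reflexive, corel_symmetric & corel_transitive].

Definition effective : Prop :=
  forall (E : MetCH R) (i : E -> X),
    is_equaliser dS i q0 q1 ->
    is_pushout (mc_d X) (mc_d X) dS i i q0 q1.

End Properties.

From HB Require Import structures.
From mathcomp Require Import all_boot all_order all_algebra generic_quotient.
From mathcomp Require Import all_classical all_reals topology ereal.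
From mathcomp Require Import lra.

(* Let A = {a | gamma((a,0),(a,1)) = 0} and
   rho(x,y) = inf_{a in A} d(x,a) + d(a,y).  Passing from (x,i) to (y,1-i)
   through (a,i) and (a,1-i) shows gamma <= rho on crossed pairs, and the
   equaliser of q0 and q1 is the closed subspace A.

   If gamma = rho on crossed pairs, a cocone (h,k) under A induces a map on
   X + X that is non-expansive for gamma, hence factors uniquely through S.

   Conversely, glue two copies of X along A, with d inside each copy and rho
   across.  Compactness of A makes rho lower semicontinuous and gives
   rho(x,y) = rho(y,x) = 0 only for x = y in A, so this is an object of
   MetCH_sep; the comparison map S -> Z provided by the pushout property is
   non-expansive, whence rho <= gamma on crossed pairs. *)

Set Implicit Arguments.
Unset Strict Implicit.
Unset Printing Implicit Defensive.

Import Order.TTheory GRing.Theory Num.Theory.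
Local Open Scope classical_set_scope.
Local Open Scope ereal_scope.
Local Open Scope quotient_scope.

Lemma pair_cst_continuous (T U : topologicalType) (b : U) :
  continuous (fun x : T => (x, b)).
Proof. by move=> x; apply: cvg_pair => //; exact: cvg_cst. Qed.

Definition copair (T U : Type) (h k : T -> U) (p : T * bool) : U :=
  if p.2 then k p.1 else h p.1.

Lemma copair_continuous (T U : topologicalType) (h k : T -> U) :
  continuous h -> continuous k -> continuous (copair h k).
Proof.
move=> ch ck [x b] W; rewrite nbhs_simpl /copair /=.
case: b => Wx.
- exists (k @^-1` W, [set true]); last by move=> [y c] /= [? ->].
  by split; [exact: ck | exact: discrete_set1].
- exists (h @^-1` W, [set false]); last by move=> [y c] /= [? ->].
  by split; [exact: ch | exact: discrete_set1].
Qed.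

Lemma open_setX (T U : topologicalType) (P : set T) (Q : set U) :
  open P -> open Q -> open (P `*` Q).
Proof.
move=> oP oQ; rewrite openE => -[x y] [/= Px Qy].
by exists (P, Q) => //; split; apply: open_nbhs_nbhs.
Qed.

Lemma separated_lsc_hausdorff (R : realType) (T : topologicalType)
    (d : T -> T -> \bar R) :
  (forall x, d x x = 0) -> (forall x y, 0 <= d x y) ->
  (forall x y, d x y = 0 -> d y x = 0 -> x = y) ->
  (forall u, open [set p : T * T | u < d p.1 p.2]) -> hausdorff_space T.
Proof.
move=> d_refl d_ge0 d_sep d_lsc.
have cluster_d0 p q : cluster (nbhs p) q -> d p q = 0.
  move=> pq; apply/eqP; rewrite eq_le d_ge0 andbT leNgt; apply/negP => d_gt0.
  have [[P Q] /= [Pp Qq] PQd] : nbhs (p, q) [set r : T * T | 0 < d r.1 r.2].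
    exact: open_nbhs_nbhs.
  have [z [Pz Qz]] := pq P Q Pp Qq.
  by have := PQd (z, z) (conj Pz Qz); rewrite /= d_refl ltxx.
move=> p q pq; apply: d_sep; apply: cluster_d0 => // Q P Qq Pp.
by have [z [Pz Qz]] := pq P Q Pp Qq; exists z.
Qed.

Section closed_subtype.
Variables (T : topologicalType) (C : set T).
Hypotheses (T_compact : compact [set: T]) (C_closed : closed C).

Lemma set_type_compact : compact [set: set_type C].
Proof.
move=> F PF _.
pose G := (set_val : set_type C -> T) @ F.
have GC : G C.
  by rewrite /G /= /fmap /=; apply: filterS filterT => y _; exact: set_valP.
have [x [[_ Cx] clx]] := compact_closedI T_compact C_closed
  (fmap_proper_filter _ PF) (filterS (fun _ Cy => conj I Cy) GC).
exists (SigSub (mem_set Cx)); split => // U V FU.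
rewrite nbhsE => -[B [[O oO OB] Bx] BV].
have GU : G (set_val @` U).
  by rewrite /G /= /fmap /=; apply: filterS FU => u Uu; exists u.
have Ox : nbhs x O by apply: open_nbhs_nbhs; split; rewrite // -OB in Bx.
have [y [[u Uu <-] Ou]] := clx _ _ GU Ox.
by exists u; split => //; apply: BV; rewrite -OB.
Qed.

End closed_subtype.

Section ereal_facts.
Variable R : realType.
Implicit Types (u w p q c t : \bar R).

Lemma lte_EFin_between u w : u < w -> exists r : R, u < r%:E < w.
Proof.
case: u => [u||]; case: w => [w||] //= uw.
- move: uw; rewrite lte_fin => /midf_lt [uw wu].
  by exists ((u + w) / 2)%R; rewrite !lte_fin uw wu.
- by exists (u + 1)%R; rewrite lte_fin ltry andbT; lra.
- by exists (w - 1)%R; rewrite lte_fin ltNyr /=; lra.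
- by exists 0%R; rewrite ltNyr ltry.
Qed.

Lemma lt_adde_split (r : R) p q : r%:E < p + q ->
  exists a b : R, [/\ a%:E < p, b%:E < q & (a + b = r)%R].
Proof.
case: p => [p||]; case: q => [q||] //=;
  rewrite ?addNye ?addeNy ?(ltNge _ -oo) ?leNye //.
- rewrite -EFinD lte_fin => rpq.
  exists (p - (p + q - r) / 2)%R, (q - (p + q - r) / 2)%R; rewrite !lte_fin.
  by split; [lra | lra | have := splitr (p + q - r)%R; lra].
- by exists (p - 1)%R, (r - p + 1)%R; rewrite lte_fin ltry; split => //; lra.
- by exists (r - q + 1)%R, (q - 1)%R; rewrite lte_fin ltry; split => //; lra.
- by exists 0%R, r; rewrite !ltry; split => //; lra.
Qed.

Lemma le_adde_ereal_inf (I : Type) (A : set I) (f : I -> \bar R) t c :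
  0 <= c -> (forall a, A a -> 0 <= f a) ->
  (forall a, A a -> t <= c + f a) -> t <= c + ereal_inf (f @` A).
Proof.
move=> c_ge0 f_ge0 tcf.
have inf_ge0 : 0 <= ereal_inf (f @` A).
  by apply: le_ereal_inf_tmp => _ [a Aa <-]; exact: f_ge0.
move: c_ge0 tcf; case: c => [c||] // _ tcf; last first.
  by rewrite addye ?leey // gt_eqF // (lt_le_trans _ inf_ge0) // ltNy0.
rewrite -leeBlDl //; apply: le_ereal_inf_tmp => _ [a Aa <-].
by rewrite leeBlDl //; exact: tcf.
Qed.

Lemma near_le_ereal_inf (T : topologicalType) (K : set T) (I : Type)
    (F : set_system I) {FF : Filter F} (v : I -> \bar R)
    (f : I -> T -> \bar R) :
  compact K ->
  (forall a, K a -> \forall a' \near a & i \near F, v i < f i a') ->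
  \forall i \near F, v i <= ereal_inf (f i @` K).
Proof.
move=> /compact_near_coveringP K_cover vf.
apply: filterS (K_cover I F (fun i a => v i < f i a) FF vf) => i vfi.
by apply: le_ereal_inf_tmp => _ [a Ka <-]; apply/ltW/vfi.
Qed.

End ereal_facts.

Lemma triangle_eq0_congr (R : realType) (T : Type) (d : T -> T -> \bar R)
    (p p' q q' : T) :
  (forall x y z, d x z <= d x y + d y z) ->
  d p p' = 0 -> d p' p = 0 -> d q q' = 0 -> d q' q = 0 -> d p q = d p' q'.
Proof.
move=> d_tri pp' p'p qq' q'q; apply/eqP; rewrite eq_le; apply/andP; split.
- apply: (le_trans (d_tri p p' q)); rewrite pp' add0e.
  by apply: (le_trans (d_tri p' q' q)); rewrite q'q adde0.
- apply: (le_trans (d_tri p' p q')); rewrite p'p add0e.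
  by apply: (le_trans (d_tri p q q')); rewrite qq' adde0.
Qed.

Section sub_MetCH.
Variables (R : realType) (X : MetCH R) (C : set X).
Hypothesis C_closed : closed C.

Definition sub_d (a b : set_type C) : \bar R := mc_d X (set_val a) (set_val b).

Lemma sub_d_lsc u : open [set p : set_type C * set_type C | u < sub_d p.1 p.2].
Proof.
have val2_cont :
    continuous (fun p : set_type C * set_type C => (set_val p.1, set_val p.2)).
  move=> p; apply: cvg_pair; apply: continuous_comp;
    [exact: cvg_fst | exact: initial_continuous |
     exact: cvg_snd | exact: initial_continuous].
by have := (continuousP _).1 val2_cont _ (@mc_d_cont R X u); congr open.
Qed.

Lemma sub_d_sep a b : sub_d a b = 0 -> sub_d b a = 0 -> a = b.
Proof. by move=> ab ba; apply: val_inj; exact: mc_d_sep ab ba. Qed.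

Definition sub_MetCH : MetCH R :=
  @MkMetCH R (set_type C) sub_d (set_type_compact (@mc_compact R X) C_closed)
    (separated_lsc_hausdorff (d := sub_d) (fun a => mc_d_refl _)
       (fun a b => mc_d_ge0 _ _) sub_d_sep sub_d_lsc)
    (fun a b => mc_d_ge0 _ _) (fun a => mc_d_refl _)
    (fun a b c => mc_d_triangle _ _ _) sub_d_sep sub_d_lsc.

Lemma set_val_mor : is_mor (mc_d sub_MetCH) (mc_d X) set_val.
Proof. by split; [exact: initial_continuous | move=> a b]. Qed.

End sub_MetCH.

Section submetric_quotient.
Variables (R : realType) (X : MetCH R) (g : submetric X).
Local Notation pi := (\pi_({eq_quot sm_equiv g})).

Lemma pi_sm_eqP (p q : X * bool) :
  pi p = pi q :> {eq_quot sm_equiv g} <-> g p q = 0 /\ g q p = 0.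
Proof. by split => [/eqquotP /asboolP | pq]; last apply/eqquotP/asboolP. Qed.

Lemma sm_repr_pi (p : X * bool) :
  g (repr (pi p : {eq_quot sm_equiv g})) p = 0 /\
  g p (repr (pi p : {eq_quot sm_equiv g})) = 0.
Proof. exact/pi_sm_eqP/reprK. Qed.

Lemma sm_dS_pi (p q : X * bool) : sm_dS g (pi p) (pi q) = g p q.
Proof.
have [rp pr] := sm_repr_pi p; have [rq qr] := sm_repr_pi q.
exact: triangle_eq0_congr (sm_triangle g) rp pr rq qr.
Qed.

Lemma sm_dS_q b b' x y : sm_dS g (sm_q g b x) (sm_q g b' y) = g (x, b) (y, b').
Proof. exact: sm_dS_pi. Qed.

Lemma sm_q_continuous b : continuous (sm_q g b).
Proof.
move=> x; apply: (@continuous_comp _ _ _ (fun x : X => (x, b))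
  (\pi_(sm_S g) : X * bool -> sm_S g)).
  exact: pair_cst_continuous.
exact: pi_continuous.
Qed.

Lemma corel_reflexive_sm_d : corel_reflexive g ->
  forall x y b, g (x, b) (y, b) = mc_d X x y.
Proof.
move=> [e [[_ e_ne] [e0 e1]]] x y b; apply/eqP; rewrite eq_le; apply/andP; split.
  by have := sm_le g (x, b) (y, b); rewrite /coprod_d eqxx.
have eqK z : e (sm_q g b z) = z.
  by case: b; [move: e1 | move: e0] => /(congr1 (fun f => f z)).
by have := e_ne (sm_q g b x) (sm_q g b y); rewrite sm_dS_q !eqK.
Qed.

Lemma sm_q_mor b : corel_reflexive g -> is_mor (mc_d X) (sm_dS g) (sm_q g b).
Proof.
move=> g_refl; split; first exact: sm_q_continuous.
by move=> x y; rewrite sm_dS_q corel_reflexive_sm_d.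
Qed.

Lemma sm_repr_nonexpansive (Z : MetCH R) (F : X * bool -> Z) :
  (forall p q, mc_d Z (F p) (F q) <= g p q) -> forall p, F (repr (pi p)) = F p.
Proof.
move=> F_ne p; have [rp pr] := sm_repr_pi p.
by apply: mc_d_sep; apply/eqP; rewrite eq_le mc_d_ge0 andbT;
  [rewrite -rp | rewrite -pr]; exact: F_ne.
Qed.

Lemma sm_lift_mor (Z : MetCH R) (F : X * bool -> Z) :
  continuous F -> (forall p q, mc_d Z (F p) (F q) <= g p q) ->
  is_mor (sm_dS g) (mc_d Z) (F \o repr).
Proof.
move=> F_cont F_ne; split=> [|s t]; last exact: F_ne.
apply/quotient_continuous.
have -> : (F \o repr) \o \pi_(sm_S g) = F.
  by apply: funext => p /=; exact: sm_repr_nonexpansive.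
exact: F_cont.
Qed.

End submetric_quotient.

Section glued_dist.
Variables (R : realType) (X : MetCH R) (g : submetric X).
Local Notation d := (mc_d X).

Definition glued : set X := [set a | g (a, false) (a, true) = 0].

Definition glued_dist (x y : X) : \bar R :=
  ereal_inf [set d x a + d a y | a in glued].

Lemma sm_q_glued a : sm_q g false a = sm_q g true a -> glued a.
Proof. by move/pi_sm_eqP => []. Qed.

Lemma d_path_ge0 x a y : 0 <= d x a + d a y.
Proof. by rewrite adde_ge0 ?mc_d_ge0. Qed.

Lemma glued_dist_ge0 x y : 0 <= glued_dist x y.
Proof. by apply: le_ereal_inf_tmp => _ [a _ <-]; exact: d_path_ge0. Qed.

Lemma glued_dist_le x y a : glued a -> glued_dist x y <= d x a + d a y.
Proof. by move=> Ga; apply: ereal_inf_lbound; exists a. Qed.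

Lemma glued_dist_id a : glued a -> glued_dist a a = 0.
Proof.
move=> Ga; apply/eqP; rewrite eq_le glued_dist_ge0 andbT.
by apply: le_trans (glued_dist_le a a Ga) _; rewrite mc_d_refl adde0.
Qed.

Lemma glued_dist_le_dl x y z : glued_dist x z <= d x y + glued_dist y z.
Proof.
apply: le_adde_ereal_inf => [|a _|a Ga]; rewrite ?mc_d_ge0 ?d_path_ge0 //.
apply: le_trans (glued_dist_le x z Ga) _.
by rewrite addeA leeD2r // mc_d_triangle.
Qed.

Lemma glued_dist_le_dr x y z : glued_dist x z <= glued_dist x y + d y z.
Proof.
rewrite addeC.
apply: le_adde_ereal_inf => [|a _|a Ga]; rewrite ?mc_d_ge0 ?d_path_ge0 //.
apply: le_trans (glued_dist_le x z Ga) _.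
by rewrite [d y z + _]addeC -addeA leeD2l // mc_d_triangle.
Qed.

Lemma d_le_glued_dist2 x y z : d x z <= glued_dist x y + glued_dist y z.
Proof.
rewrite addeC; apply: le_adde_ereal_inf => [|a _|a _];
  rewrite ?glued_dist_ge0 ?d_path_ge0 //.
rewrite addeC; apply: le_adde_ereal_inf => [|b _|b _]; rewrite ?d_path_ge0 //.
apply: le_trans (mc_d_triangle x a z) _; rewrite -addeA leeD2l //.
apply: le_trans (mc_d_triangle a y z) _; rewrite leeD2l //.
exact: mc_d_triangle.
Qed.

Lemma glued_closed : closed glued.
Proof.
have -> : glued = ~` [set a | 0 < g (a, false) (a, true)].
  apply/seteqP; split => a /=; first by move=> ->; rewrite ltxx.
  by move/negP; rewrite -leNgt => ga0; apply/eqP; rewrite eq_le ga0 sm_ge0.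
apply: open_closedC.
have diag_cont : continuous (fun a : X => ((a, false), (a, true))).
  move=> a W [[P Q] /= [Pa Qa] PQW]; rewrite nbhs_simpl /=.
  have Pa' : nbhs a [set x | P (x, false)] := @pair_cst_continuous X _ false a _ Pa.
  have Qa' : nbhs a [set x | Q (x, true)] := @pair_cst_continuous X _ true a _ Qa.
  near=> y; apply: PQW; split; [exact: (near Pa' y) | exact: (near Qa' y)].
by have := (continuousP _).1 diag_cont _ (@sm_cont R X g 0); congr open.
Unshelve. all: by end_near.
Qed.

Lemma glued_compact : compact glued.
Proof.
rewrite -[glued]setTI.
by apply: compact_closedI; [exact: mc_compact | exact: glued_closed].
Qed.

Lemma lt_d_path_near (r : R) x a y : r%:E < d x a + d a y ->
  \forall a' \near a & p \near (x, y), r%:E < d p.1 a' + d a' p.2.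
Proof.
move=> /lt_adde_split [s [t [sd td <-]]].
have [[P1 Q1] /= [P1x Q1a] sd'] : nbhs (x, a) [set p : X * X | s%:E < d p.1 p.2].
  by apply: open_nbhs_nbhs; split; [exact: mc_d_cont|].
have [[P2 Q2] /= [P2a Q2y] td'] : nbhs (a, y) [set p : X * X | t%:E < d p.1 p.2].
  by apply: open_nbhs_nbhs; split; [exact: mc_d_cont|].
exists (Q1 `&` P2, P1 `*` Q2) => /=.
  by split; [exact: filterI | exists (P1, Q2)].
move=> [a' [x' y']] /= [[Q1a' P2a'] [P1x' Q2y']]; rewrite EFinD.
by apply: lteD; [exact: (sd' (x', a')) | exact: (td' (a', y'))].
Qed.

Lemma glued_dist_lsc u : open [set p : X * X | u < glued_dist p.1 p.2].
Proof.
rewrite openE => -[x y] /= /lte_EFin_between [r /andP [ur rd]].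
have : \forall p \near (x, y), r%:E <= glued_dist p.1 p.2.
  apply: (near_le_ereal_inf (F := nbhs (x, y)) (v := fun=> r%:E)
    (f := fun p a => d p.1 a + d a p.2));
    [exact: glued_compact | move=> a Ga].
  by apply: lt_d_path_near; apply: lt_le_trans rd (glued_dist_le x y Ga).
by apply: filterS => p; apply: lt_le_trans.
Qed.

Lemma glued_dist_eq0 x y : glued_dist x y = 0 ->
  exists2 a, glued a & d x a = 0 /\ d a y = 0.
Proof.
(* Otherwise compactness of A bounds d x a + d a y below by some 1/(n+1). *)
move=> xy0; apply: contrapT => no_a.
have pos a : glued a -> 0 < d x a + d a y.
  move=> Ga; rewrite lt_def d_path_ge0 andbT.
  rewrite padde_eq0 ?mc_d_ge0 //; apply/negP => /andP [/eqP xa /eqP ay].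
  by apply: no_a; exists a.
have : \forall n \near \oo, ((n.+1%:R)^-1)%:E <= glued_dist x y.
  apply: (near_le_ereal_inf (f := fun _ a => d x a + d a y));
    [exact: glued_compact | move=> a Ga].
  have [c /andP [c0 cd]] := lte_EFin_between (pos a Ga).
  have [[A P] /= [Aa Pxy] AP] := lt_d_path_near cd.
  exists (A, [set n : nat | (c^-1 <= n%:R)%R]) => /=.
    by split => //; apply: nbhs_infty_ger.
  move=> [a' n] /= [Aa' cn]; apply: lt_trans (AP (a', (x, y)) _); last first.
    by split => //; exact: nbhs_singleton.
  move: c0; rewrite !lte_fin => c0; rewrite invf_plt ?posrE //.
  by apply: le_lt_trans cn _; rewrite ltr_nat.
move=> /filter_ex [n]; rewrite xy0 lee_fin leNgt invr_gt0 ltr0n.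
by [].
Qed.

End glued_dist.

Section refl_sym_corelation.
Variables (R : realType) (X : MetCH R) (g : submetric X).
Hypotheses (g_refl : corel_reflexive g) (g_sym : corel_symmetric g).

Lemma glued_sym a : glued g a -> g (a, true) (a, false) = 0.
Proof.
move: g_sym => [s [[_ s_ne] [s0 s1]]] Ga.
apply/eqP; rewrite eq_le sm_ge0 andbT.
have := s_ne (sm_q g false a) (sm_q g true a).
by rewrite -[s (sm_q g false a)]/((s \o _) a) -[s (sm_q g true a)]/((s \o _) a)
  s0 s1 /= !sm_dS_q Ga.
Qed.

Lemma glued_sm_q a : glued g a -> sm_q g false a = sm_q g true a.
Proof. by move=> Ga; apply/pi_sm_eqP; split; last exact: glued_sym. Qed.

Lemma glued_cross0 a b : glued g a -> g (a, b) (a, ~~ b) = 0.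
Proof. by case: b => [/glued_sym|]. Qed.

Lemma sm_cross_le_glued_dist x y b : g (x, b) (y, ~~ b) <= glued_dist g x y.
Proof.
apply: le_ereal_inf_tmp => _ [a Ga <-].
apply: le_trans (sm_triangle g _ (a, b) _) _.
rewrite corel_reflexive_sm_d //; apply: leeD => //.
apply: le_trans (sm_triangle g _ (a, ~~ b) _) _.
by rewrite glued_cross0 // add0e corel_reflexive_sm_d.
Qed.

Lemma equaliser_glued_agree (E : MetCH R) (i : E -> X) (T : Type) (h k : X -> T) :
  is_equaliser (sm_dS g) i (sm_q g false) (sm_q g true) ->
  h \o i = k \o i -> forall a, glued g a -> h a = k a.
Proof.
(* Test the equaliser against the one-point subspace {a}. *)
move=> [_ _ i_univ] hk a Ga.
have a_closed : closed [set a].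
  exact/accessible_closed_set1/hausdorff_accessible/mc_hausdorff.
pose j : sub_MetCH a_closed -> X := set_val.
have ja z : j z = a by exact: (set_valP z).
have jq : sm_q g false \o j = sm_q g true \o j.
  by apply: funext => z /=; rewrite ja; exact: glued_sm_q.
have [v [[_ iv] _]] := i_univ _ j (set_val_mor a_closed) jq.
pose pt : sub_MetCH a_closed := SigSub (mem_set (erefl a : [set a] a)).
have <- : i (v pt) = a by rewrite -[i (v pt)]/((i \o v) pt) iv ja.
by rewrite -[h _]/((h \o i) (v pt)) hk.
Qed.

Lemma effective_of_cross_glued_dist :
  (forall x y b, g (x, b) (y, ~~ b) = glued_dist g x y) -> effective g.
Proof.
move=> g_cross E i i_eq; have [_ iq _] := i_eq.
split; [exact: sm_q_mor | exact: sm_q_mor | exact: iq |].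
move=> Z h k h_mor k_mor hk.
have hk_glued := equaliser_glued_agree i_eq hk.
pose F := copair h k.
have F_mor b : is_mor (mc_d X) (mc_d Z) (fun x => F (x, b)) by case: b.
have F_ne p q : mc_d Z (F p) (F q) <= g p q.
  case: p q => [x b] [y c]; have [<-|/negPf bc] := eqVneq b c.
    by rewrite corel_reflexive_sm_d //; exact: (F_mor b).2.
  have -> : c = ~~ b by move: bc; case: b; case: c.
  rewrite g_cross; apply: le_ereal_inf_tmp => _ [a Ga <-].
  apply: le_trans (mc_d_triangle _ (F (a, b)) _) _; apply: leeD.
    exact: (F_mor b).2.
  have -> : F (a, b) = F (a, ~~ b).
    by case: b {bc}; rewrite /F /copair /= hk_glued.
  exact: (F_mor (~~ b)).2.
have F_repr := sm_repr_nonexpansive F_ne.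
exists (F \o repr); split; first split.
- exact: sm_lift_mor (copair_continuous h_mor.1 k_mor.1) F_ne.
- by split; apply: funext => x /=; rewrite F_repr.
- move=> u [_ [u0 u1]]; apply: funext => s; rewrite -(reprK s).
  case: (repr s) => x b; rewrite /= F_repr /F /copair /=.
  by case: b; [rewrite -u1 | rewrite -u0].
Qed.

End refl_sym_corelation.

Section glued_sum.
Variables (R : realType) (X : MetCH R) (g : submetric X).
Local Notation d := (mc_d X).
Local Notation A := (glued g).
Local Notation rho := (glued_dist g).

Definition glued_sum_d (p q : X * bool) : \bar R :=
  if p.2 == q.2 then d p.1 q.1 else rho p.1 q.1.

Lemma glued_sum_d_ge0 p q : 0 <= glued_sum_d p q.
Proof. by rewrite /glued_sum_d; case: ifP; rewrite ?mc_d_ge0 ?glued_dist_ge0. Qed.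

Lemma glued_sum_d_refl p : glued_sum_d p p = 0.
Proof. by rewrite /glued_sum_d eqxx mc_d_refl. Qed.

Lemma glued_sum_d_triangle p q r :
  glued_sum_d p r <= glued_sum_d p q + glued_sum_d q r.
Proof.
case: p q r => [x b] [y c] [z e]; rewrite /glued_sum_d /=.
by case: b; case: c; case: e;
  rewrite /= ?mc_d_triangle ?glued_dist_le_dl ?glued_dist_le_dr ?d_le_glued_dist2.
Qed.

Lemma glued_sum_d_same x y b : glued_sum_d (x, b) (y, b) = d x y.
Proof. by rewrite /glued_sum_d /= eqxx. Qed.

Lemma glued_sum_d_cross x y b : glued_sum_d (x, b) (y, ~~ b) = rho x y.
Proof. by rewrite /glued_sum_d /=; case: b. Qed.

Lemma glued_sum_d_lsc b c u :
  open [set xy : X * X | u < glued_sum_d (xy.1, b) (xy.2, c)].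
Proof.
rewrite /glued_sum_d /=.
by case: (b == c); [exact: mc_d_cont | exact: glued_dist_lsc].
Qed.

Definition glue_rel (p q : X * bool) : bool :=
  (p == q) || ((p.1 == q.1) && `[< A p.1 >]).

Lemma glue_rel_refl : reflexive glue_rel.
Proof. by move=> p; rewrite /glue_rel eqxx. Qed.

Lemma glue_rel_sym : symmetric glue_rel.
Proof.
move=> p q; rewrite /glue_rel eq_sym; congr orb.
by have [->|/negPf] := eqVneq p.1 q.1; rewrite ?eqxx // eq_sym => ->.
Qed.

Lemma glue_rel_trans : transitive glue_rel.
Proof.
move=> p q r /orP [/eqP -> //|/andP [/eqP qp Aq]].
move=> /orP [/eqP <-|/andP [/eqP pr _]]; apply/orP; right;
  by rewrite Aq andbT qp ?pr.
Qed.

Definition glue_equiv : equiv_rel (X * bool) :=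
  EquivRel glue_rel glue_rel_refl glue_rel_sym glue_rel_trans.

Lemma glue_rel_d0 p q : glue_rel p q -> glued_sum_d p q = 0 /\ glued_sum_d q p = 0.
Proof.
move=> /orP [/eqP ->|/andP [/eqP pq /asboolP Ap]]; first by rewrite glued_sum_d_refl.
case: p q pq Ap => [x b] [y c] /= <- Ax; rewrite /glued_sum_d /=.
by case: b; case: c; rewrite /= ?mc_d_refl ?glued_dist_id.
Qed.

Lemma glued_dist_sep x y : rho x y = 0 -> rho y x = 0 -> x = y /\ A x.
Proof.
move=> /glued_dist_eq0 [a Aa [xa ay]] /glued_dist_eq0 [a' Aa' [ya' a'x]].
have d0 u v w : d u v = 0 -> d v w = 0 -> d u w = 0.
  move=> uv vw; apply/eqP; rewrite eq_le mc_d_ge0 andbT.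
  by apply: le_trans (mc_d_triangle u v w) _; rewrite uv vw adde0.
have -> : x = a by exact: mc_d_sep xa (d0 _ _ _ ay (d0 _ _ _ ya' a'x)).
by have -> : y = a by exact: mc_d_sep (d0 _ _ _ ya' (d0 _ _ _ a'x xa)) ay.
Qed.

Lemma glued_sum_d_sep p q :
  glued_sum_d p q = 0 -> glued_sum_d q p = 0 -> glue_rel p q.
Proof.
case: p q => [x b] [y c]; rewrite /glued_sum_d /= eq_sym.
have [<- xy yx|_ /glued_dist_sep xy /xy [<- Ax]] := eqVneq c b.
  by rewrite /glue_rel (mc_d_sep xy yx) eqxx.
by rewrite /glue_rel /= eqxx; apply/orP; right; apply/asboolP.
Qed.

Definition glued_sum_topology : topologicalType :=
  quotient_topology {eq_quot glue_equiv}.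

Definition glued_sum_pi (p : X * bool) : glued_sum_topology :=
  (\pi_({eq_quot glue_equiv}) p : {eq_quot glue_equiv}).

Definition glued_sum_dist (s t : glued_sum_topology) : \bar R :=
  glued_sum_d (repr (s : {eq_quot glue_equiv})) (repr (t : {eq_quot glue_equiv})).

Local Notation piZ := glued_sum_pi.

Lemma glued_sum_piP p q : piZ p = piZ q <-> glue_rel p q.
Proof. by split => [/eqquotP|pq]; last apply/eqquotP. Qed.

Lemma glued_sum_piK (s : glued_sum_topology) :
  piZ (repr (s : {eq_quot glue_equiv})) = s.
Proof. exact: reprK. Qed.

Lemma glued_sum_dist_pi p q : glued_sum_dist (piZ p) (piZ q) = glued_sum_d p q.
Proof.
have [rp pr] := glue_rel_d0 ((glued_sum_piP _ _).1 (glued_sum_piK (piZ p))).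
have [rq qr] := glue_rel_d0 ((glued_sum_piP _ _).1 (glued_sum_piK (piZ q))).
exact: triangle_eq0_congr glued_sum_d_triangle rp pr rq qr.
Qed.

Lemma glued_sum_pi_continuous : continuous piZ.
Proof. exact: (@pi_continuous _ {eq_quot glue_equiv}). Qed.

Lemma glued_sum_compact : compact [set: glued_sum_topology].
Proof.
have -> : [set: glued_sum_topology] = piZ @` [set: X * bool].
  apply/seteqP; split => // s _.
  by exists (repr (s : {eq_quot glue_equiv})); rewrite ?glued_sum_piK.
apply: continuous_compact; first exact/continuous_subspaceT/glued_sum_pi_continuous.
by rewrite -setXTT; apply: compact_setX; [exact: mc_compact | exact: bool_compact].
Qed.

End glued_sum.

Section glued_sum_MetCH.
Variables (R : realType) (X : MetCH R) (g : submetric X).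
Local Notation A := (glued g).
Local Notation piZ := (glued_sum_pi g).
Local Notation rho := (glued_sum_d g).

Definition glue_fibre (x : X) (i : bool) : set bool := [set b | A x \/ b = i].

Lemma glue_fibre_rel x i b : glue_fibre x i b -> glue_rel g (x, i) (x, b).
Proof.
rewrite /glue_rel /= => -[Ax|->]; last by rewrite eqxx.
by apply/orP; right; rewrite eqxx; apply/asboolP.
Qed.

Lemma glued_sum_pi_nbhs x i (N : set X) :
  nbhs x N -> nbhs (piZ (x, i)) (piZ @` (N `*` glue_fibre x i)).
Proof.
(* Boxes O * glue_fibre x i, with O disjoint from A unless x is glued, are
   saturated, hence open in the quotient. *)
move=> Nx.
have Ax_nbhs : nbhs x [set y | ~ A x -> ~ A y].
  have [Ax|nAx] := pselect (A x); first by apply: nearW => y /(_ Ax).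
  apply: filterS (_ : nbhs x (~` A)) => [y nAy _ //|].
  by apply: open_nbhs_nbhs; split => //; exact/closed_openC/glued_closed.
have : nbhs x (N `&` [set y | ~ A x -> ~ A y]) by exact: filterI.
rewrite nbhsE => -[O [oO Ox] ON].
pose U := O `*` glue_fibre x i.
have U_saturated : piZ @^-1` (piZ @` U) = U.
  apply/seteqP; split => [[y c] [[z b] [/= Oz Bb]]|p Up]; last by exists p.
  move/glued_sum_piP => /orP [/eqP [<- <-] //|/andP [/= /eqP zy /asboolP Az]].
  subst y; split => //; left; apply: contrapT => nAx.
  by have [_ /(_ nAx)] := ON z Oz.
apply: (@filterS _ _ _ (piZ @` U)).
  move=> _ [[y b] [/= Oy Bb] <-]; exists (y, b) => //.
  by split => //; have [] := ON y Oy.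
apply: open_nbhs_nbhs; split; last by exists (x, i) => //; split => //; right.
rewrite /open /= /quotient_open U_saturated.
by apply: open_setX => //; exact: discrete_open.
Qed.

Lemma glued_sum_dist_lsc u :
  open [set st : glued_sum_topology g * glued_sum_topology g |
        u < glued_sum_dist st.1 st.2].
Proof.
(* The product of two quotient maps need not be a quotient map, so we work
   with the saturated boxes of glued_sum_pi_nbhs. *)
rewrite openE => -[s0 t0] /=.
rewrite -(glued_sum_piK s0) -(glued_sum_piK t0).
case: (repr (s0 : {eq_quot glue_equiv g})) => x0 i0.
case: (repr (t0 : {eq_quot glue_equiv g})) => y0 j0.
rewrite glued_sum_dist_pi => u_rho.
have near_bc b c : nbhs (x0, y0) [set xy : X * X |
    glue_fibre x0 i0 b -> glue_fibre y0 j0 c -> u < rho (xy.1, b) (xy.2, c)].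
  have [[Bb Bc]|nBbc] := pselect (glue_fibre x0 i0 b /\ glue_fibre y0 j0 c);
    last by apply: filterS (@filterT _ (nbhs (x0, y0)) _) => xy _ Bb Bc;
      exfalso; exact: nBbc.
  have : nbhs (x0, y0) [set xy : X * X | u < rho (xy.1, b) (xy.2, c)].
    apply: open_nbhs_nbhs; split; first exact: glued_sum_d_lsc.
    have [ib bi] := glue_rel_d0 (glue_fibre_rel Bb).
    have [jc cj] := glue_rel_d0 (glue_fibre_rel Bc).
    by rewrite /= (triangle_eq0_congr (glued_sum_d_triangle g) bi ib cj jc).
  by apply: filterS => xy ? _ _.
have := filterI (filterI (near_bc true true) (near_bc true false))
                (filterI (near_bc false true) (near_bc false false)).
move=> [[N M] /= [Nx My] NM].
exists (piZ @` (N `*` glue_fibre x0 i0), piZ @` (M `*` glue_fibre y0 j0)) => /=.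
  by split; apply: glued_sum_pi_nbhs.
move=> [_ _] /= [[[x b] [/= Nx' Bb] <-] [[y c] [/= My' Bc] <-]].
rewrite glued_sum_dist_pi; have [[tt tf] [ft ff]] := NM (x, y) (conj Nx' My').
by case: b c Bb Bc => [] []; [exact: tt | exact: tf | exact: ft | exact: ff].
Qed.

Lemma glued_sum_dist_sep (s t : glued_sum_topology g) :
  glued_sum_dist s t = 0 -> glued_sum_dist t s = 0 -> s = t.
Proof.
rewrite -(glued_sum_piK s) -(glued_sum_piK t) !glued_sum_dist_pi => st ts.
exact/glued_sum_piP/glued_sum_d_sep.
Qed.

Definition glued_sum : MetCH R :=
  @MkMetCH R (glued_sum_topology g) (@glued_sum_dist _ _ g)
    (glued_sum_compact (g := g))
    (separated_lsc_hausdorff (d := @glued_sum_dist _ _ g)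
       (fun s => glued_sum_d_refl _ _) (fun s t => glued_sum_d_ge0 _ _ _)
       glued_sum_dist_sep glued_sum_dist_lsc)
    (fun s t => glued_sum_d_ge0 _ _ _) (fun s => glued_sum_d_refl _ _)
    (fun s t r => glued_sum_d_triangle _ _ _ _)
    glued_sum_dist_sep glued_sum_dist_lsc.

Lemma glued_sum_inj_mor b :
  is_mor (mc_d X) (mc_d glued_sum) (fun x => piZ (x, b)).
Proof.
split=> [x|x y]; last by rewrite /= glued_sum_dist_pi glued_sum_d_same.
apply: (@continuous_comp _ _ _ (fun x : X => (x, b)) piZ);
  [exact: pair_cst_continuous | exact: glued_sum_pi_continuous].
Qed.

Lemma glued_sum_inj_glued :
  (fun x => piZ (x, false)) \o set_val = (fun x => piZ (x, true)) \o
    (set_val : sub_MetCH (glued_closed (g := g)) -> X).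
Proof.
apply: funext => a /=; apply/glued_sum_piP.
by rewrite /glue_rel /= eqxx; apply/orP; right; apply/asboolP; exact: (set_valP a).
Qed.

End glued_sum_MetCH.

Section effective_only_if.
Variables (R : realType) (X : MetCH R) (g : submetric X).
Hypothesis g_sym : corel_symmetric g.

Lemma glued_equaliser :
  is_equaliser (sm_dS g) (set_val : sub_MetCH (glued_closed (g := g)) -> X)
    (sm_q g false) (sm_q g true).
Proof.
split; first exact: set_val_mor.
  by apply: funext => a /=; exact/glued_sm_q/(set_valP a).
move=> Z j j_mor jq.
have jA z : glued g (j z) by apply: sm_q_glued; exact: (congr1 (fun f => f z) jq).
exists (fun z => SigSub (mem_set (jA z)) : sub_MetCH _); split; first split.
- split; last by move=> a b; exact: j_mor.2.
  by apply: (@continuous_comp_initial _ _ _ set_val); exact: j_mor.1.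
- exact: funext.
- move=> u [_ iu]; apply: funext => z; apply: val_inj => /=.
  exact: (congr1 (fun f => f z) iu).
Qed.

Lemma glued_dist_le_cross_of_effective : effective g ->
  forall x y b, glued_dist g x y <= g (x, b) (y, ~~ b).
Proof.
move=> g_eff x y b.
have [_ _ _ univ] := g_eff _ _ glued_equaliser.
have [u [[[_ u_ne] [u0 u1]] _]] := univ (glued_sum g) _ _
  (glued_sum_inj_mor g false) (glued_sum_inj_mor g true) (glued_sum_inj_glued g).
have uq c z : u (sm_q g c z) = glued_sum_pi g (z, c).
  by case: c; [move: u1 | move: u0] => /(congr1 (fun f => f z)).
have := u_ne (sm_q g b x) (sm_q g (~~ b) y).
by rewrite sm_dS_q !uq /= glued_sum_dist_pi glued_sum_d_cross.
Qed.

End effective_only_if.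

Theorem lemma5p12 (R : realType) (X : MetCH R) (g : submetric X) :
  equivalence_submetric g ->
  (effective g <->
   forall (x y : X) (i : bool),
     g (x, i) (y, ~~ i) =
       ereal_inf [set mc_d X x a + mc_d X a y
                 | a in [set a : X | g (a, false) (a, true) = 0]]).
Proof.
move=> [g_refl g_sym _]; split; last exact: effective_of_cross_glued_dist.
move=> g_eff x y i; change (g (x, i) (y, ~~ i) = glued_dist g x y).
apply/eqP; rewrite eq_le sm_cross_le_glued_dist //.
exact: glued_dist_le_cross_of_effective.
Qed.
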